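(* At any time during the execution of DASH (described in the context) on an initially connected graph, for every surviving node $v$ and every $q\in N(v,G')$, we have $W(T(v,q))\ge \mathrm{rem}(v)$.
   Context: Model: a network is an undirected graph, initially a connected graph $G_0$ on $n$ nodes. In each round an adversary deletes one surviving node $v$ with its incident edges, and then DASH adds edges. $G$ is the current network; $E'$ is the set of healing edges added so far whose endpoints both survive; $G'=(V(G),E')$. $N(u,G)$, $N(u,G')$ are neighbor sets in $G$, $G'$; $\delta(u)=\deg_G(u)-\deg_{G_0}(u)$. DASH: initially every node receives an ID drawn independently and uniformly from $[0,1]$ (its initial ID). When $v$ is deleted (quantities evaluated just before the deletion): partition the nodes of $N(v,G)$ whose current ID differs from that of $v$ into classes of equal current ID; $UN(v,G)$ consists of one node per class, the one with lowest initial ID. Let $S=UN(v,G)\cup N(v,G')$. Order $S$ by increasing $\delta$ and place it in this order into a complete binary tree with $|S|$ positions, filled level by level from the top and left to right; add to the network and to $E'$ the edge between each node of $S$ and the node at its parent position. Then all nodes of the component of $G'$ containing $S$ set their ID to the minimum current ID in $S$. Weights: every node $u$ has weight $w(u)$, initially $1$; when a node $v$ is deleted, $w(v)$ is added to the weight of an arbitrarily chosen node of $N(v,G')$. For a subgraph $H$, $W(H)$ is the sum of the weights of its vertices. For distinct surviving nodes $x,y$, $T(x,y)$ is the connected component of $G'-y$ containing $x$. Define $\mathrm{rem}(v)=\sum_{u\in N(v,G')}W(T(u,v))-\max_{u\in N(v,G')}W(T(u,v))+w(v)$ (the maximum over the empty set being $0$). *)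

From HB Require Import structures.
From mathcomp Require Import all_boot all_order all_algebra.
From mathcomp Require Import reals.
Set Implicit Arguments. Unset Strict Implicit. Unset Printing Implicit Defensive.
Import Order.TTheory GRing.Theory Num.Theory.

Section DASH.
Variable R : realType.
Variable T : finType.

(* A network state.  Edges are unordered pairs, i.e. 2-element sets. *)
Record state := State {
  alive  : {set T};
  edges  : {set {set T}};
  hedges : {set {set T}};      (* E' : healing edges with both endpoints alive *)
  cid    : T -> R;
  wt     : T -> nat
}.

Definition nbr (E : {set {set T}}) (u : T) : {set T} :=
  [set x | (x != u) && ([set u; x] \in E)].

Definition edges_of (g : rel T) : {set {set T}} :=
  [set e : {set T} | [exists x, exists y, g x y && (e == [set x; y])]].

Definition deg0 (g : rel T) (u : T) : nat := #|[set y | g u y]|.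

Definition delta (g : rel T) (st : state) (u : T) : int :=
  (#|nbr (edges st) u|)%:Z - (deg0 g u)%:Z.

Definition init_state (g : rel T) (id0 : T -> R) : state :=
  State setT (edges_of g) set0 id0 (fun _ => 1%N).

(* UN(v,G): among the neighbours of v whose current ID differs from that of v,
   one per class of equal current ID, the one with lowest initial ID. *)
Definition UN (id0 : T -> R) (st : state) (v : T) : {set T} :=
  [set u in nbr (edges st) v |
     (cid st u != cid st v) &&
     [forall u' in nbr (edges st) v,
        (cid st u' == cid st u) ==> (id0 u <= id0 u')%R]].

(* edges of the complete binary tree obtained by placing s level by level
   (0-indexed position i >= 1 has parent position (i-1)/2) *)
Definition tree_edges (d : T) (s : seq T) : {set {set T}} :=
  [set [set nth d s (val i); nth d s (val i).-1./2] |
     i in [pred i : 'I_(size s) | 0 < val i]].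

(* Nondeterminism: v, the order s of S among equal deltas, the node sm
   realising the minimum ID (the value is determined), the weight recipient. *)
Definition dash_step (g : rel T) (id0 : T -> R) (st st' : state) : Prop :=
  exists v, v \in alive st /\
  let S := UN id0 st v :|: nbr (hedges st) v in
  exists s : seq T,
    [/\ perm_eq s (enum S),
        sorted (fun a b => delta g st a <= delta g st b)%R s,
        alive st' = alive st :\ v,
        edges st' = [set e in edges st | v \notin e] :|: tree_edges v s
      & hedges st' = [set e in hedges st | v \notin e] :|: tree_edges v s] /\
  ((S = set0 /\ cid st' = cid st) \/
   (exists2 sm, sm \in S &
      (forall u, u \in S -> (cid st sm <= cid st u)%R) /\
      cid st' = (fun x =>
        if [exists u in S, connect (fun a b => [set a; b] \in hedges st') u x]
        then cid st sm else cid st x))) /\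
  (* weight transfer to an arbitrary node of N(v,G') (lost if none) *)
  ((nbr (hedges st) v = set0 /\ wt st' = wt st) \/
   (exists2 r, r \in nbr (hedges st) v &
      wt st' = (fun x => if x == r then (wt st x + wt st v)%N else wt st x))).

Inductive reachable (g : rel T) (id0 : T -> R) : state -> Prop :=
  | reach_init : reachable g id0 (init_state g id0)
  | reach_step st st' : reachable g id0 st -> dash_step g id0 st st' ->
                        reachable g id0 st'.

Definition Tcomp (st : state) (x y : T) : {set T} :=
  [set z in alive st |
     connect (fun a b => ([set a; b] \in hedges st) && (y \notin [set a; b])) x z].

Definition Wsum (st : state) (A : {set T}) : nat := \sum_(z in A) wt st z.

Definition remW (st : state) (v : T) : nat :=
  (\sum_(u in nbr (hedges st) v) Wsum st (Tcomp st u v)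
   - \max_(u in nbr (hedges st) v) Wsum st (Tcomp st u v) + wt st v)%N.

End DASH.

From HB Require Import structures.
From mathcomp Require Import all_boot all_order all_algebra.
From mathcomp Require Import reals zify.
Import Order.TTheory GRing.Theory Num.Theory.
Set Implicit Arguments. Unset Strict Implicit. Unset Printing Implicit Defensive.

(* The healing graph G' stays a forest whose components carry a single current
   ID.  Indeed the nodes of S lie in pairwise distinct components of G' - v:
   the nodes of UN(v,G) have pairwise distinct IDs, all different from that of
   v, while N(v,G') shares the ID of v and its members are separated by v in
   the forest.  So the new binary tree joins distinct trees and G' remains a
   forest.  In a forest the subtrees T(u,v), u in N(v,G'), are disjoint, and
   those with u <> q lie, together with v, inside T(v,q); hence
   W(T(v,q)) >= w(v) + sum_(u <> q) W(T(u,v)) >= rem(v). *)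

Section Forests.
Variable T : finType.
Implicit Types (F H E : {set {set T}}) (A B : {set T}) (d : T) (s : seq T).

Definition edge_rel H : rel T := fun x y => [set x; y] \in H.

Definition avoid_rel H v : rel T :=
  fun x y => ([set x; y] \in H) && (v \notin [set x; y]).

Definition forest H :=
  forall a b, a != b -> [set a; b] \in H ->
    ~~ connect (edge_rel (H :\ [set a; b])) a b.

Lemma connect_ind (e : rel T) (P : T -> Prop) x :
  P x -> (forall a b, P a -> e a b -> P b) -> forall y, connect e x y -> P y.
Proof.
move=> Px step y /connectP[p pth ->]; elim: p x Px pth => //= z p IH x Px.
by case/andP=> /(step _ _ Px) Pz; apply: IH.
Qed.

Lemma connect_edge_sym H : connect_sym (edge_rel H).
Proof. by apply: sym_connect_sym => x y; rewrite /edge_rel setUC. Qed.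

Lemma connect_avoid_sym H v : connect_sym (avoid_rel H v).
Proof. by apply: sym_connect_sym => x y; rewrite /avoid_rel setUC. Qed.

Lemma edge_rel_avoid H v : edge_rel [set e in H | v \notin e] =2 avoid_rel H v.
Proof. by move=> x y; rewrite /edge_rel inE. Qed.

Lemma connect_edge_subset H H' :
  H \subset H' -> subrel (connect (edge_rel H)) (connect (edge_rel H')).
Proof.
by move=> sHH'; apply: connect_sub => x y xy; apply: connect1; apply: (subsetP sHH').
Qed.

Lemma forest_subset H H' : H' \subset H -> forest H -> forest H'.
Proof.
move=> sH'H fH a b ab abH'; apply: contra (fH a b ab (subsetP sH'H _ abH')).
exact: connect_edge_subset (setSD _ sH'H) a b.
Qed.

Lemma connect_setU1_edge F a b x y :
  connect (edge_rel (F :|: [set [set a; b]])) x y ->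
  connect (edge_rel F) x y \/
  (connect (edge_rel F) x a \/ connect (edge_rel F) x b) /\
  (connect (edge_rel F) a y \/ connect (edge_rel F) b y).
Proof.
move: y; apply: connect_ind => [|z w Pz]; first by left.
rewrite /edge_rel in_setU in_set1 => /orP[/(@connect1 _ (edge_rel F)) zw | /eqP zw].
  case: Pz => [xz | [xab [az | bz]]]; first by left; apply: connect_trans zw.
    by right; split; last by left; apply: connect_trans zw.
  by right; split; last by right; apply: connect_trans zw.
have /set2P zab : z \in [set a; b] by rewrite -zw set21.
have /set2P wab : w \in [set a; b] by rewrite -zw set22.
right; split; last by case: wab => ->; [left | right].
by case: Pz => [xz | [] //]; case: zab xz => <-; [left | right].
Qed.

Lemma forest_setU1 F a b :
  forest F -> a != b -> ~~ connect (edge_rel F) a b ->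
  forest (F :|: [set [set a; b]]).
Proof.
move=> fF ab nab c d cd; set C := connect (edge_rel F) in nab.
have Csym : connect_sym (edge_rel F) by apply: connect_edge_sym.
rewrite in_setU in_set1.
case: (eqVneq [set c; d] [set a; b]) => [cd_ab _ | cd_ab /[!orbF] cdF].
  have sub : (F :|: [set [set a; b]]) :\ [set c; d] \subset F.
    by apply/subsetP => e; rewrite !inE cd_ab; case: (e == _); rewrite //= orbF.
  have /set2P cab : c \in [set a; b] by rewrite -cd_ab set21.
  have /set2P dab : d \in [set a; b] by rewrite -cd_ab set22.
  apply: contra nab => /(connect_edge_subset sub).
  by case: cab dab cd => -> [] ->; rewrite ?eqxx // Csym.
set C' := connect (edge_rel (F :\ [set c; d])).
have sub : (F :|: [set [set a; b]]) :\ [set c; d] \subset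
           (F :\ [set c; d]) :|: [set [set a; b]].
  by apply/subsetP => e; rewrite !inE; case: (e == [set a; b]); rewrite ?orbT ?orbF.
have nCcd : ~~ C' c d := fF c d cd cdF.
have CF : subrel C' C by apply: connect_edge_subset; apply: subsetDl.
have CFs x y : C' x y -> C y x by move/CF; rewrite /C Csym.
have Ccd : C c d by apply: connect1.
apply/negP => /(connect_edge_subset sub) /connect_setU1_edge.
case=> [Ccd' | [[ca | cb] [ad | bd]]].
- exact: negP nCcd Ccd'.
- by case/negP: nCcd; apply: connect_trans ca ad.
- case/negP: nab.
  exact: connect_trans (CFs _ _ ca) (connect_trans Ccd (CFs _ _ bd)).
- case/negP: nab; apply: connect_trans (CF _ _ ad) (connect_trans _ (CF _ _ cb)).
  by rewrite /C Csym.
- by case/negP: nCcd; apply: connect_trans cb bd.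
Qed.

Lemma forest_nbr_disconnected H v u1 u2 :
  forest H -> u1 \in nbr H v -> u2 \in nbr H v -> u1 != u2 ->
  ~~ connect (avoid_rel H v) u1 u2.
Proof.
move=> fH; rewrite !inE => /andP[u1v e1] /andP[u2v e2] u12.
apply: contra (fH v u1 _ e1) => [C|]; last by rewrite eq_sym.
have u2_notin : u2 \notin [set v; u1] by rewrite !inE negb_or u2v eq_sym u12.
have e2' : [set v; u2] \in H :\ [set v; u1].
  by rewrite in_setD1 e2 andbT; apply: contraNneq u2_notin => <-; rewrite set22.
apply: connect_trans (connect1 e2') _; rewrite connect_edge_sym.
apply: connect_sub C => x y /andP[xyH vxy]; apply: connect1.
by rewrite /edge_rel in_setD1 xyH andbT; apply: contra vxy => /eqP ->; rewrite set21.
Qed.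

Lemma connect_avoid_swap H v q x y :
  ~~ connect (avoid_rel H v) x q ->
  connect (avoid_rel H v) x y -> connect (avoid_rel H q) x y.
Proof.
move=> xq Cxy; suff: connect (avoid_rel H v) x y /\ connect (avoid_rel H q) x y by case.
move: y Cxy; apply: connect_ind => [|a b [Ca Ca'] ab]; first by split.
have Cb := connect_trans Ca (connect1 ab); split=> //.
apply: (connect_trans Ca'); apply: connect1; case/andP: ab => abH _.
rewrite /avoid_rel abH /=.
by apply/set2P => -[] eq; move: xq; rewrite eq ?Ca ?Cb.
Qed.

Lemma connect_setU_away F E A x y :
  (forall a b, [set a; b] \in E -> a \in A) ->
  (forall z, connect (edge_rel F) x z -> z \notin A) ->
  connect (edge_rel (F :|: E)) x y -> connect (edge_rel F) x y.
Proof.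
move=> EA xA; move: y; apply: connect_ind => // z w xz.
rewrite /edge_rel in_setU => /orP[zw | /EA zA]; last by move: (xA _ xz); rewrite zA.
exact: connect_trans xz (connect1 zw).
Qed.

Definition tree_edge (d : T) (s : seq T) (i : nat) : {set T} :=
  [set nth d s i; nth d s i.-1./2].

Definition tree_prefix (d : T) (s : seq T) (k : nat) : {set {set T}} :=
  [set tree_edge d s i | i : 'I_(size s) & 0 < i <= k].

Lemma tree_edges_prefix d s : tree_edges d s = tree_prefix d s (size s).
Proof.
apply/setP => e; apply/imsetP/imsetP => -[i]; rewrite !inE => i0 ->; exists i => //.
  by rewrite inE i0 ltnW.
by case/andP: i0.
Qed.

Lemma mem_take_nth d s n j :
  uniq s -> j < size s -> (nth d s j \in take n s) = (j < n).
Proof. by move=> us js; rewrite in_take ?mem_nth // index_uniq. Qed.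

Lemma tree_prefix_mem d s k a b :
  uniq s -> [set a; b] \in tree_prefix d s k -> a \in take k.+1 s.
Proof.
move=> us /imsetP[i]; rewrite inE => /andP[i0 ik] eab; have lt_is := ltn_ord i.
have /set2P[->|->] : a \in tree_edge d s i by rewrite -eab set21.
  by rewrite mem_take_nth // ltnS.
rewrite mem_take_nth; lia.
Qed.

Lemma tree_prefixS d s k :
  tree_prefix d s k.+1 \subset tree_prefix d s k :|: [set tree_edge d s k.+1].
Proof.
apply/subsetP => e /imsetP[i]; rewrite inE => /andP[i0 +] ->; rewrite in_setU in_set1.
rewrite leq_eqVlt => /orP[/eqP -> | ik]; first by rewrite eqxx orbT.
by apply/orP; left; apply/imsetP; exists i; rewrite // inE i0.
Qed.

Lemma tree_prefix_over d s k :
  size s <= k.+1 -> tree_prefix d s k.+1 \subset tree_prefix d s k.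
Proof.
move=> sk; apply/subsetP => e /imsetP[i]; rewrite inE => /andP[i0 _] ->.
apply/imsetP; exists i => //.
by rewrite inE i0 -ltnS (leq_trans (ltn_ord i)).
Qed.

Lemma forest_setU_tree_edges F d s :
  forest F -> uniq s -> {in s &, forall x y, x != y -> ~~ connect (edge_rel F) x y} ->
  forest (F :|: tree_edges d s).
Proof.
move=> fF us disc; rewrite tree_edges_prefix; elim: (size s) => [|k IH].
  apply: forest_subset fF; apply/subsetP => e; rewrite in_setU.
  by case/orP => // /imsetP[i]; rewrite inE; lia.
case: (ltnP k.+1 (size s)) => [ks | sk]; last first.
  by apply: forest_subset IH; apply: setUS; apply: tree_prefix_over.
apply: forest_subset (setUS F (tree_prefixS d s k)) _; rewrite setUA /tree_edge /=.
set x := nth d s k.+1; set p := nth d s k./2.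
have ps : k./2 < size s by lia.
have px : x != p by rewrite nth_uniq //; lia.
apply: forest_setU1 IH (px) _.
apply: contra (disc x p (mem_nth d ks) (mem_nth d ps) px).
apply: (connect_setU_away (A := [set y in take k.+1 s])) => [a b | z xz].
  by rewrite inE; apply: tree_prefix_mem.
rewrite inE; apply: contraTN xz => zk; have zs := mem_take zk.
apply: disc => //; first exact: mem_nth.
by apply: contraTneq zk => <-; rewrite mem_take_nth // ltnn.
Qed.

Lemma leq_sum_subset (w : T -> nat) A B :
  A \subset B -> \sum_(z in A) w z <= \sum_(z in B) w z.
Proof.
by move=> sAB; rewrite [X in _ <= X](big_setID A) /= (setIidPr sAB) leq_addr.
Qed.

Lemma leq_sum_disjoint (I : finType) (P : pred I) (C : I -> {set T}) B (w : T -> nat) :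
  (forall i j, P i -> P j -> i != j -> [disjoint C i & C j]) ->
  (forall i, P i -> C i \subset B) ->
  \sum_(i | P i) \sum_(z in C i) w z <= \sum_(z in B) w z.
Proof.
move=> disC sCB; pose C' i := if P i then C i else set0.
have disC' i j : i != j -> [disjoint C' i & C' j].
  rewrite /C'; case: ifP => Pi; case: ifP => Pj ij;
    rewrite -?setI_eq0 ?set0I ?setI0 //.
  by rewrite setI_eq0; apply: disC.
rewrite big_mkcond /=.
have -> : \sum_i (if P i then \sum_(z in C i) w z else 0) = \sum_i \sum_(z in C' i) w z.
  by apply: eq_bigr => i _; rewrite /C'; case: ifP; rewrite ?big_set0.
rewrite -partition_disjoint_bigcup //; apply: leq_sum_subset.
by apply/bigcupsP => i _; rewrite /C'; case: ifP => [/sCB // | _]; apply: sub0set.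
Qed.

End Forests.

Section Healing.
Variables (R : realType) (T : finType) (g : rel T) (id0 : T -> R).
Implicit Types st : state R T.

Definition dash_inv st :=
  forest (hedges st) /\
  forall a b, connect (edge_rel (hedges st)) a b -> cid st a = cid st b.

Lemma dash_inv_init : dash_inv (init_state g id0).
Proof.
split=> [a b _ | a b]; first by rewrite inE.
by case/connectP => -[_ -> // | x p /andP[]]; rewrite /edge_rel inE.
Qed.

Hypothesis id0_inj : injective id0.

Lemma healing_set_disconnected st v :
  dash_inv st ->
  {in UN id0 st v :|: nbr (hedges st) v &,
    forall x y, x != y -> ~~ connect (avoid_rel (hedges st) v) x y}.
Proof.
case=> fH cH x y xS yS xy; apply/negP => Cxy.
have cxy : cid st x = cid st y.
  by apply: cH; apply: connect_sub Cxy => a b /andP[ab _]; apply: connect1.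
have cN u : u \in nbr (hedges st) v -> cid st u = cid st v.
  by rewrite inE => /andP[_ vu]; symmetry; apply: cH; apply: connect1.
have cU u : u \in UN id0 st v -> cid st u != cid st v.
  by rewrite inE => /andP[_ /andP[]].
move: xS yS; rewrite !in_setU => /orP[xU | xN] /orP[yU | yN].
- move: (xU) (yU); rewrite !inE => /andP[xn /andP[_ /forallP Fx]].
  move=> /andP[yn /andP[_ /forallP Fy]].
  move: (Fx y) (Fy x); rewrite !inE yn xn cxy eqxx /= => xy' yx'.
  by move: xy => /eqP; apply; apply: id0_inj; apply/eqP; rewrite eq_le xy' yx'.
- by move: (cU _ xU); rewrite cxy (cN _ yN) eqxx.
- by move: (cU _ yU); rewrite -cxy (cN _ xN) eqxx.
- by move/negP: (forest_nbr_disconnected fH xN yN xy).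
Qed.

Lemma dash_inv_step st st' : dash_inv st -> dash_step g id0 st st' -> dash_inv st'.
Proof.
move=> inv [v [_ [s [[ps _ _ _ Eh] [Hcid _]]]]]; have [fH cH] := inv.
set S := _ :|: _ in ps Hcid; set H0 := [set e in hedges st | v \notin e] in Eh.
have us : uniq s by rewrite (perm_uniq ps) enum_uniq.
have memS : s =i S by move=> x; rewrite (perm_mem ps) mem_enum.
have tree_S a b : [set a; b] \in tree_edges v s -> a \in S.
  by rewrite tree_edges_prefix -memS => /(tree_prefix_mem us) /mem_take.
have H0H : H0 \subset hedges st by apply/subsetP => e; rewrite inE => /andP[].
split.
  rewrite Eh; apply: forest_setU_tree_edges => [|//|x y]; first exact: forest_subset fH.
  rewrite !memS => xS yS xy; rewrite (eq_connect (edge_rel_avoid _ _)).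
  exact: healing_set_disconnected inv x y xS yS xy.
move=> a b Cab; rewrite Eh in Cab.
case: Hcid => [[S0 ->] | [sm _ [_ ->]]].
  apply: cH; apply: connect_edge_subset H0H _ _ _.
  by apply: connect_setU_away tree_S _ Cab => z _; rewrite S0 inE.
have reach_ab : [exists u in S, connect (edge_rel (hedges st')) u a] =
                [exists u in S, connect (edge_rel (hedges st')) u b].
  apply/existsP/existsP => -[u /andP[uS Cu]]; exists u; rewrite uS /=.
    by apply: connect_trans Cu _; rewrite Eh.
  by apply: connect_trans Cu _; rewrite connect_edge_sym Eh.
rewrite /= -reach_ab; case: ifP => // /negbT naS.
apply: cH; apply: connect_edge_subset H0H _ _ _.
apply: connect_setU_away tree_S _ Cab => z az; apply: contra naS => zS.
apply/existsP; exists z; rewrite zS /= connect_edge_sym Eh.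
by apply: connect_edge_subset az; apply: subsetUl.
Qed.

Lemma dash_inv_reachable st : reachable g id0 st -> dash_inv st.
Proof.
elim=> [|s1 s2 _ inv1 step]; [exact: dash_inv_init | exact: dash_inv_step inv1 step].
Qed.

End Healing.

Section Subtrees.
Variables (R : realType) (T : finType) (st : state R T) (v : T).
Local Notation N := (nbr (hedges st) v).

Lemma Tcomp_nbr_notin u : u \in N -> v \notin Tcomp st u v.
Proof.
rewrite inE => /andP[uv _]; rewrite inE negb_and; apply/orP; right.
have avoid_v : forall z, connect (avoid_rel (hedges st) v) u z -> z != v.
  by apply: connect_ind => // a b _ /andP[_]; apply: contra => /eqP->; rewrite set22.
by apply/negP => /avoid_v; rewrite eqxx.
Qed.

Hypothesis fH : forest (hedges st).

Lemma Tcomp_nbr_disjoint u1 u2 :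
  u1 \in N -> u2 \in N -> u1 != u2 -> [disjoint Tcomp st u1 v & Tcomp st u2 v].
Proof.
move=> u1N u2N u12; rewrite -setI_eq0; apply/eqP/setP => z; rewrite !inE.
apply/negP => /andP[/andP[_ C1] /andP[_ C2]].
move/negP: (forest_nbr_disconnected fH u1N u2N u12); apply.
by apply: connect_trans C1 _; rewrite connect_avoid_sym.
Qed.

Lemma Tcomp_nbr_sub u q :
  u \in N -> q \in N -> u != q -> Tcomp st u v \subset Tcomp st v q.
Proof.
move=> uN qN uq; apply/subsetP => z; rewrite !inE => /andP[-> Cz] /=.
have [qv vu] : q != v /\ [set v; u] \in hedges st.
  by move: qN uN; rewrite !inE => /andP[-> _] /andP[_ ->].
apply: connect_trans (connect1 (_ : avoid_rel _ q v u)) _.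
  by rewrite /avoid_rel vu !inE negb_or qv eq_sym uq.
exact: connect_avoid_swap (forest_nbr_disconnected fH uN qN uq) Cz.
Qed.

End Subtrees.

Lemma remW_le_Tcomp (R : realType) (T : finType) (st : state R T) v q :
  forest (hedges st) -> v \in alive st -> q \in nbr (hedges st) v ->
  remW st v <= Wsum st (Tcomp st v q).
Proof.
move=> fH va qN.
have sum_q : \sum_(u in nbr (hedges st) v) Wsum st (Tcomp st u v) =
  Wsum st (Tcomp st q v) + \sum_(u in nbr (hedges st) v | u != q) Wsum st (Tcomp st u v).
  by rewrite (bigD1 q qN).
have max_q :
    Wsum st (Tcomp st q v) <= \max_(u in nbr (hedges st) v) Wsum st (Tcomp st u v).
  by rewrite (bigD1 q qN) leq_maxl.
have others : \sum_(u in nbr (hedges st) v | u != q) Wsum st (Tcomp st u v)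
              <= Wsum st (Tcomp st v q :\ v).
  apply: leq_sum_disjoint => [u1 u2 /andP[u1N _] /andP[u2N _] | u /andP[uN uq]].
    exact: Tcomp_nbr_disjoint.
  by rewrite subsetD1 Tcomp_nbr_sub // Tcomp_nbr_notin.
have split_v : Wsum st (Tcomp st v q) = wt st v + Wsum st (Tcomp st v q :\ v).
  by rewrite /Wsum (big_setD1 v) // inE va connect0.
rewrite /remW sum_q; lia.
Qed.

Unset Implicit Arguments. Set Strict Implicit.

Theorem lemma3 (R : realType) (T : finType) (g : rel T) (id0 : T -> R)
  (g_sym : symmetric g) (g_irr : irreflexive g)
  (g_conn : forall x y : T, connect g x y)
  (id0_range : forall x, (0 <= id0 x <= 1)%R)
  (id0_inj : injective id0)
  (st : state R T) (Hst : reachable g id0 st) :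
  forall v q : T, v \in alive st -> q \in nbr (hedges st) v ->
    (remW st v <= Wsum st (Tcomp st v q))%N.
Proof.
move=> v q va qN; apply: remW_le_Tcomp va qN.
by case: (dash_inv_reachable id0_inj Hst).
Qed.
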